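(* Let $\mathcal{E}=\{E_1,\ldots,E_m\}$ be a set of two-outcome measurements and let $T$ be a positive integer. Then there exists a test procedure $Q$ such that: (i) $Q$ takes a state $\rho_0$ as input, applies at most $T$ measurements from $\mathcal{E}$, and returns either ''success'' or ''failure''; (ii) if $\epsilon\ge0$ and $\operatorname{Tr}(E_i\rho_0)\ge1-\epsilon$ for all $i$, then $Q$ succeeds with probability at least $1-T\sqrt{\epsilon}$; (iii) if $Q$ succeeds on input $\rho_0$ with probability at least $\lambda>0$, then conditioned on succeeding, $Q$ outputs a state $\sigma$ such that $\operatorname{Tr}(E_i\sigma)\ge1-2\sqrt{m/(\lambda T)}$ for all $i\in\{1,\ldots,m\}$.
   Context: A two-outcome measurement on a quantum system is a Hermitian operator $E$ with eigenvalues in $[0,1]$; applied to state $\rho$ it accepts with probability $\operatorname{Tr}(E\rho)$ and the state is updated to the corresponding post-measurement state. *)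

From Stdlib Require Import ClassicalEpsilon.
From mathcomp Require Import all_boot all_order all_algebra.
From mathcomp Require Import reals complex.
Set Implicit Arguments. Unset Strict Implicit. Unset Printing Implicit Defensive.
Import Order.TTheory GRing.Theory Num.Theory.
Local Open Scope ring_scope.
Local Open Scope complex_scope.

Section Quantum.
Variable R : realType.
Local Notation C := (R[i]).

Definition adjmx {d : nat} (A : 'M[C]_d) : 'M[C]_d := (map_mx Num.conj A)^T.

Definition hermitian {d : nat} (A : 'M[C]_d) : Prop := adjmx A = A.

Definition psd {d : nat} (A : 'M[C]_d) : Prop :=
  hermitian A /\ forall a : C, eigenvalue A a -> 0 <= a.

Definition is_state {d : nat} (rho : 'M[C]_d) : Prop :=
  psd rho /\ \tr rho = 1.

Definition is_measurement {d : nat} (E : 'M[C]_d) : Prop :=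
  hermitian E /\ forall a : C, eigenvalue E a -> 0 <= a <= 1.

Definition psd_sqrt {d : nat} (A : 'M[C]_d) : 'M[C]_d :=
  epsilon (inhabits (0 : 'M[C]_d)) (fun S => psd S /\ S *m S = A).

(* Lueders post-measurement (unnormalized) states of the accepting /
   rejecting outcomes of the measurement E on rho. *)
Definition accept_update {d : nat} (E rho : 'M[C]_d) : 'M[C]_d :=
  psd_sqrt E *m rho *m psd_sqrt E.
Definition reject_update {d : nat} (E rho : 'M[C]_d) : 'M[C]_d :=
  psd_sqrt (1%:M - E) *m rho *m psd_sqrt (1%:M - E).

(* Test procedures: adaptive, classically randomized decision trees whose
   internal nodes apply a measurement from the family E : 'I_m -> 'M_d
   (continuing in the accept or reject branch) or flip a biased coin. *)
Inductive proc (m : nat) : Type :=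
| PSucc : proc m
| PFail : proc m
| PMeas : 'I_m -> proc m -> proc m -> proc m
| PMix  : R -> proc m -> proc m -> proc m.

Arguments PSucc {m}. Arguments PFail {m}.

Fixpoint proc_wf {m : nat} (Q : proc m) : Prop :=
  match Q with
  | PSucc | PFail => True
  | PMeas _ a r => proc_wf a /\ proc_wf r
  | PMix p a b => (0 <= p <= 1) /\ proc_wf a /\ proc_wf b
  end.

Fixpoint num_meas {m : nat} (Q : proc m) : nat :=
  match Q with
  | PSucc | PFail => 0
  | PMeas _ a r => (maxn (num_meas a) (num_meas r)).+1
  | PMix _ a b => maxn (num_meas a) (num_meas b)
  end.

(* unnormalized output state on the "success" event *)
Fixpoint succ_op {m d : nat} (E : 'I_m -> 'M[C]_d) (Q : proc m)
    (rho : 'M[C]_d) : 'M[C]_d :=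
  match Q with
  | PSucc => rho
  | PFail => 0
  | PMeas i a r => succ_op E a (accept_update (E i) rho)
                   + succ_op E r (reject_update (E i) rho)
  | PMix p a b => (p%:C) *: succ_op E a rho + (1 - p%:C) *: succ_op E b rho
  end.

Definition succ_prob {m d : nat} (E : 'I_m -> 'M[C]_d) (Q : proc m)
    (rho : 'M[C]_d) : C := \tr (succ_op E Q rho).

Definition succ_state {m d : nat} (E : 'I_m -> 'M[C]_d) (Q : proc m)
    (rho : 'M[C]_d) : 'M[C]_d := (succ_prob E Q rho)^-1 *: succ_op E Q rho.

End Quantum.
Arguments PSucc {R m}. Arguments PFail {R m}.

(* The test picks s uniformly in {0, ..., T-1} and then runs s rounds, each
   measuring a uniformly random E_i and failing at the first rejection.

   Completeness: with S_i = sqrt E_i, one round changes |tr (K rho)| by at most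
   |tr ((1 - S_i) K rho)|, which Cauchy-Schwarz and (1 - S_i)^2 <= 1 - E_i bound
   by sqrt eps.  Hence s rounds accept with probability at least 1 - 2 s sqrt eps,
   and the average over s is at least 1 - T sqrt eps.

   Soundness: let Y_s be the unnormalized state after s accepted rounds and
   Z = Y_0 + ... + Y_(T-1).  Since sum_i tr ((1 - E_i) Y_s) = m (tr Y_s - tr Y_(s+1)),
   the sum telescopes to sum_i tr ((1 - E_i) Z) <= m.  The output state is
   Z / tr Z with tr Z = T Pr[success] >= lam T, so
   tr (E_i sigma) >= 1 - m / (lam T) >= 1 - 2 sqrt (m / (lam T)). *)

From HB Require Import structures.
From Stdlib Require Import ClassicalEpsilon.
From Pilot Require Import Defs.
From mathcomp Require Import all_boot all_order all_algebra.
From mathcomp Require Import reals complex ring lra.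
Import Order.TTheory GRing.Theory Num.Theory Num.Def.
Set Implicit Arguments. Unset Strict Implicit. Unset Printing Implicit Defensive.
Local Open Scope ring_scope.
Local Open Scope sesquilinear_scope.
Local Open Scope complex_scope.

Lemma sum_twice_nat (R : comPzRingType) T :
  \sum_(0 <= s < T) (2 * s%:R : R) = T%:R * (T%:R - 1).
Proof.
elim: T => [|T IHT]; first by rewrite big_nil mul0r.
by rewrite big_nat_recr //= IHT -natr1; ring.
Qed.

Lemma sub1_divr_le (F : realFieldType) (u t w k : F) :
  0 < u -> u <= t -> t - w <= k -> 0 <= k -> 1 - k / u <= w / t.
Proof.
move=> u_gt0 u_le_t tw_le k_ge0; have t_gt0 := lt_le_trans u_gt0 u_le_t.
have k_le : k <= k * (t / u) by rewrite ler_peMr // ler_pdivlMr // mul1r.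
by rewrite ler_pdivlMr // mulrBl mul1r mulrAC; lra.
Qed.

Lemma sub1_2sqrt_le (F : rcfType) (x y : F) :
  0 <= x -> 0 <= y -> 1 - x <= y -> 1 - 2 * Num.sqrt x <= y.
Proof.
move=> x_ge0 y_ge0 le_y; have s_ge0 := sqrtr_ge0 x.
have [x_le1 | x_gt1] := lerP x 1; last first.
  have : 1 <= Num.sqrt x by rewrite -sqrtr1 ler_wsqrtr // ltW.
  by lra.
have : x <= Num.sqrt x.
  by rewrite -{1}(sqr_sqrtr x_ge0) expr2 ler_piMl // -sqrtr1 ler_wsqrtr.
by lra.
Qed.

Lemma ge0_complexE (F : rcfType) (z : F[i]) : 0 <= z -> exists2 r : F, 0 <= r & z = r%:C.
Proof.
move=> z_ge0; have /complex_realP[r rE] := ger0_real z_ge0.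
by exists r; rewrite // -ler0c -rE.
Qed.

Section Gram.
Variable C : numClosedFieldType.

Lemma trmxC_mul p q r (A : 'M[C]_(p, q)) (B : 'M[C]_(q, r)) :
  (A *m B)^t* = B^t* *m A^t*.
Proof. by rewrite trmx_mul map_mxM. Qed.

Lemma trmxCZ p q (c : C) (A : 'M[C]_(p, q)) : (c *: A)^t* = c^* *: A^t*.
Proof. by apply/matrixP => i j; rewrite !mxE rmorphM. Qed.

Lemma trmxCB p q (A B : 'M[C]_(p, q)) : (A - B)^t* = A^t* - B^t*.
Proof. by apply/matrixP => i j; rewrite !mxE rmorphB. Qed.

Lemma trmxC1 n : (1%:M : 'M[C]_n)^t* = 1%:M.
Proof. by rewrite trmx1 map_mx1. Qed.

Lemma mxtrace_mulmxtC_ge0 p q (B : 'M[C]_(p, q)) : 0 <= \tr (B *m B^t*).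
Proof.
apply: sumr_ge0 => i _; rewrite !mxE; apply: sumr_ge0 => j _.
by rewrite !mxE mul_conjC_ge0.
Qed.

Lemma mxtrace_mulmxtC_dotmx p q (X Y : 'M[C]_(p, q)) :
  \tr (X^t* *m Y) = dotmx (mxvec Y) (mxvec X).
Proof.
rewrite dotmxE mxE (reindex (uncurry (@mxvec_index p q))) /=; last first.
  exact: curry_mxvec_bij.
rewrite /mxtrace (eq_bigr (fun j => \sum_i (X i j)^* * Y i j)); last first.
  by move=> j _; rewrite !mxE; apply: eq_bigr => i _; rewrite !mxE.
rewrite exchange_big pair_bigA; apply: eq_bigr => -[i j] _.
by rewrite !mxE !mxvecE mulrC.
Qed.

Lemma mxtrace_CauchySchwarz p q (X Y : 'M[C]_(p, q)) :
  `|\tr (X^t* *m Y)| ^+ 2 <= \tr (X^t* *m X) * \tr (Y^t* *m Y).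
Proof.
rewrite !mxtrace_mulmxtC_dotmx mulrC.
exact: (CauchySchwarz (@dotmx C _) _ _).1.
Qed.

Definition gram d (X : 'M[C]_d) : Prop := exists n (B : 'M[C]_(d, n)), X = B *m B^t*.

Lemma gram_mxtrace_ge0 d (X : 'M[C]_d) : gram X -> 0 <= \tr X.
Proof. by case=> n [B ->]; apply: mxtrace_mulmxtC_ge0. Qed.

Lemma gram0 d : gram (0 : 'M[C]_d).
Proof. by exists 0%N, 0; rewrite mul0mx. Qed.

Lemma gramD d (X Y : 'M[C]_d) : gram X -> gram Y -> gram (X + Y).
Proof.
case=> n [B ->] [n' [B' ->]]; exists (n + n')%N, (row_mx B B').
by rewrite tr_row_mx map_col_mx mul_row_col.
Qed.

Lemma gramZ d (a : C) (X : 'M[C]_d) : 0 <= a -> gram X -> gram (a *: X).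
Proof.
move=> a_ge0 [n [B ->]]; exists n, (sqrtC a *: B).
rewrite trmxCZ -scalemxAl -scalemxAr scalerA.
by rewrite geC0_conj ?sqrtC_ge0 // -expr2 sqrtCK.
Qed.

Lemma gram_sum d I (r : seq I) (P : pred I) (F : I -> 'M[C]_d) :
  (forall i, P i -> gram (F i)) -> gram (\sum_(i <- r | P i) F i).
Proof.
move=> gF; elim/big_rec: _ => [|i X Pi gX]; first exact: gram0.
by apply: gramD => //; apply: gF.
Qed.

Lemma gram_conj d d' (K : 'M[C]_(d', d)) (X : 'M[C]_d) :
  gram X -> gram (K *m X *m K^t*).
Proof. by case=> n [B ->]; exists n, (K *m B); rewrite trmxC_mul !mulmxA. Qed.

Lemma gram_trmxC_mul d d' (K : 'M[C]_(d', d)) : gram (K^t* *m K).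
Proof. by exists d', (K^t*); rewrite trmxCK. Qed.

Lemma gram_mxtrace_mul_ge0 d (P X : 'M[C]_d) : gram P -> gram X -> 0 <= \tr (P *m X).
Proof.
case=> n [A ->] [n' [B ->]].
rewrite -mulmxA mxtrace_mulC.
have -> : A^t* *m (B *m B^t*) *m A = (A^t* *m B) *m (A^t* *m B)^t*.
  by rewrite trmxC_mul trmxCK !mulmxA.
exact: mxtrace_mulmxtC_ge0.
Qed.

Lemma gram_mxtrace_CauchySchwarz d (rho A B : 'M[C]_d) : gram rho ->
  `|\tr (B^t* *m A *m rho)| ^+ 2 <= \tr (B^t* *m B *m rho) * \tr (A^t* *m A *m rho).
Proof.
case=> n [G ->].
have trE (U V : 'M[C]_d) : \tr (U^t* *m V *m (G *m G^t*)) = \tr ((U *m G)^t* *m (V *m G)).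
  by rewrite trmxC_mul mulmxA mxtrace_mulC !mulmxA.
by rewrite !trE; apply: mxtrace_CauchySchwarz.
Qed.

End Gram.

Section UnitaryDiag.
Variables (C : numClosedFieldType) (n : nat).
Implicit Types (P A : 'M[C]_n) (c : 'rV[C]_n).

Definition udiag P c := P^t* *m diag_mx c *m P.

Lemma hermitian_udiag A : A^t* = A ->
  exists2 P, P \is unitarymx & exists c, A = udiag P c.
Proof.
move=> AtC; have Aherm : A \is hermsymmx.
  by apply/is_hermitianmxP; rewrite expr0 scale1r AtC.
exists (spectralmx A); first exact: spectral_unitarymx.
exists (spectral_diag A).
have /orthomx_spectralP {1}-> := hermitian_normalmx Aherm.
by rewrite invmx_unitary ?spectral_unitarymx.
Qed.

Lemma udiag_trmxC P c : (udiag P c)^t* = udiag P (map_mx conjC c).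
Proof. by rewrite /udiag !trmxC_mul trmxCK tr_diag_mx map_diag_mx mulmxA. Qed.

Lemma udiagM P c c' : P \is unitarymx ->
  udiag P c *m udiag P c' = udiag P (\row_k (c 0 k * c' 0 k)).
Proof.
move=> /unitarymxP PPtC; rewrite /udiag -!mulmxA; congr (_ *m _).
by rewrite [P *m _]mulmxA PPtC mul1mx mulmxA mulmx_diag.
Qed.

Lemma udiagB P c c' : udiag P c - udiag P c' = udiag P (c - c').
Proof. by rewrite /udiag raddfB mulmxBr mulmxBl. Qed.

Lemma eigenvalue_udiag P c a : P \is unitarymx ->
  eigenvalue (udiag P c) a <-> exists k, a = c 0 k.
Proof.
move=> /unitarymxP PPtC; split.
  case/eigenvalueP => v vA v_neq0.
  pose w := v *m P^t*.
  have wD : w *m diag_mx c = a *: w.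
    by rewrite /w scalemxAl -vA /udiag !mulmxA -[_ *m P *m _]mulmxA PPtC mulmx1.
  have [k wk_neq0] : exists k, w 0 k != 0.
    apply/existsP; apply: contraNT v_neq0 => /existsPn w0.
    have {}w0 : w = 0 by apply/rowP => k; rewrite [RHS]mxE; exact/eqP/negbNE/w0.
    by rewrite -[v]mulmx1 -(mulmx1C PPtC) mulmxA -/w w0 mul0mx.
  exists k; apply: (mulIf wk_neq0).
  by move/rowP: wD => /(_ k); rewrite mul_mx_diag !mxE mulrC.
case=> k ->; apply/eigenvalueP; exists (row k P).
  by rewrite /udiag !mulmxA -row_mul PPtC row1 -rowE row_diag_mx -scalemxAl -rowE.
apply/eqP => /(congr1 (mulmx^~ (P^t*))) /=.
rewrite -row_mul PPtC row1 mul0mx => /rowP/(_ k).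
by rewrite !mxE !eqxx => /eqP; rewrite oner_eq0.
Qed.

Lemma gram_udiag P c : (forall k, 0 <= c 0 k) -> gram (udiag P c).
Proof.
move=> c_ge0; exists n, (P^t* *m diag_mx (map_mx sqrtC c)).
rewrite trmxC_mul trmxCK tr_diag_mx map_diag_mx mulmxA -(mulmxA _ _ (diag_mx _)).
rewrite mulmx_diag /udiag; congr (_ *m diag_mx _ *m _); apply/rowP => k.
rewrite !mxE -[RHS]/(sqrtC (c 0 k) * (sqrtC (c 0 k))^*).
by rewrite geC0_conj ?sqrtC_ge0 // -expr2 sqrtCK.
Qed.

End UnitaryDiag.

Section Measurements.
Variables (R : realType) (d : nat).
Local Notation C := R[i].
Implicit Types (A E X : 'M[C]_d).

Lemma adjmxE A : adjmx A = A^t*.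
Proof. by rewrite /adjmx map_trmx. Qed.

Lemma psd_udiag A : psd A ->
  exists2 P : 'M_d, P \is unitarymx &
  exists2 c : 'rV_d, (forall k, 0 <= c 0 k) & A = udiag P c.
Proof.
case; rewrite /Defs.hermitian adjmxE => /hermitian_udiag[P P_unit [c ->]] c_ge0.
by exists P => //; exists c => // k; apply/c_ge0/eigenvalue_udiag => //; exists k.
Qed.

Lemma psd_gram A : psd A -> gram A.
Proof. by case/psd_udiag => P _ [c c_ge0 ->]; apply: gram_udiag. Qed.

Lemma state_gram A : is_state A -> gram A.
Proof. by case=> /psd_gram. Qed.

Lemma measurement_psd E : is_measurement E -> psd E.
Proof. by case=> E_herm E_eig; split=> // a /E_eig /andP[]. Qed.

Lemma measurement_gram E : is_measurement E -> gram E.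
Proof. by move/measurement_psd/psd_gram. Qed.

Lemma measurement_sub1 E : is_measurement E -> is_measurement (1%:M - E).
Proof.
case; rewrite /Defs.hermitian adjmxE => E_herm E_eig.
split; first by rewrite /Defs.hermitian adjmxE trmxCB trmxC1 E_herm.
move=> a /eigenvalueP[v vE v_neq0].
have /E_eig : eigenvalue E (1 - a).
  apply/eigenvalueP; exists v => //.
  by move: vE; rewrite mulmxBr mulmx1 scalerBl scale1r => <-; rewrite opprB addrC subrK.
by rewrite subr_ge0 gerBl andbC.
Qed.

Lemma psd_sqrt_spec A : psd A -> psd (psd_sqrt A) /\ psd_sqrt A *m psd_sqrt A = A.
Proof.
move=> psdA; apply: (epsilon_spec (inhabits 0) (fun S => psd S /\ S *m S = A)).
have [P P_unit [c c_ge0 ->]] := psd_udiag psdA.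
exists (udiag P (map_mx sqrtC c)); split; last first.
  rewrite (udiagM _ _ P_unit); congr udiag.
  by apply/rowP => k; rewrite !mxE -expr2 sqrtCK.
split=> [|a /eigenvalue_udiag[// | k ->]]; last by rewrite mxE sqrtC_ge0.
rewrite /Defs.hermitian adjmxE udiag_trmxC; congr udiag; apply/rowP => k.
by rewrite !mxE geC0_conj // sqrtC_ge0.
Qed.

Lemma psd_sqrt_trmxC A : psd A -> (psd_sqrt A)^t* = psd_sqrt A.
Proof. by case/psd_sqrt_spec => -[]; rewrite /Defs.hermitian adjmxE. Qed.

Lemma psd_sqrtK A : psd A -> psd_sqrt A *m psd_sqrt A = A.
Proof. by case/psd_sqrt_spec. Qed.

Lemma gram_accept_update E X : is_measurement E -> gram X -> gram (accept_update E X).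
Proof.
move=> /measurement_psd/psd_sqrt_trmxC S_herm gX.
by rewrite /accept_update -{2}S_herm; apply: gram_conj.
Qed.

Lemma gram_reject_update E X : is_measurement E -> gram X -> gram (reject_update E X).
Proof. by move/measurement_sub1; apply: gram_accept_update. Qed.

Lemma mxtrace_accept_update E X : is_measurement E ->
  \tr (accept_update E X) = \tr (E *m X).
Proof.
by move=> /measurement_psd/psd_sqrtK SS; rewrite /accept_update mxtrace_mulC mulmxA SS.
Qed.

(* On an eigenvalue b of [psd_sqrt E] the matrix below is 2 b (1 - b) >= 0,
   and b <= 1 because b^2 is an eigenvalue of E. *)
Lemma gram_sub_sqr_psd_sqrt E : is_measurement E ->
  gram ((1%:M - E) - (1%:M - psd_sqrt E) *m (1%:M - psd_sqrt E)).
Proof.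
move=> measE; have psdE := measurement_psd measE.
have [[S_herm S_eig] SS] := psd_sqrt_spec psdE.
set S := psd_sqrt E in S_herm S_eig SS *.
have [P P_unit [b b_ge0 Sb]] := psd_udiag (conj S_herm S_eig).
have SSb : S *m S = udiag P (\row_k (b 0 k * b 0 k)) by rewrite Sb (udiagM _ _ P_unit).
have b_le1 k : b 0 k <= 1.
  have /andP[_ bb_le1] : 0 <= b 0 k * b 0 k <= 1.
    case: measE => _; apply; rewrite -SS SSb.
    by apply/eigenvalue_udiag => //; exists k; rewrite mxE.
  by rewrite -(ler_pXn2r (_ : 0 < 2)%N) ?nnegrE ?b_ge0 // expr1n expr2.
have -> : (1%:M - E) - (1%:M - S) *m (1%:M - S) = (S - E) *+ 2.
  rewrite mulmxBl mul1mx mulmxBr mulmx1 SS opprB addrA [1%:M - E + _]addrC -addrA.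
  by rewrite opprB [1%:M - E + _]addrC [S - 1%:M + _]addrA subrK mulr2n.
rewrite mulr2n -SS SSb Sb udiagB.
have gap_ge0 k : 0 <= b 0 k - b 0 k * b 0 k.
  by rewrite -{1}[b 0 k]mulr1 -mulrBr mulr_ge0 ?subr_ge0.
by apply: gramD; apply: gram_udiag => k; rewrite !mxE.
Qed.
End Measurements.

Section Contraction.
Variables (R : realType) (d : nat) (E rho : 'M[R[i]]_d).
Hypotheses (measE : is_measurement E) (g_rho : gram rho).
Local Notation S := (psd_sqrt E).

Lemma mxtrace_sqrt_contraction (K : 'M[R[i]]_d) :
  \tr ((S *m K)^t* *m (S *m K) *m rho) <= \tr (K^t* *m K *m rho).
Proof.
have psdE := measurement_psd measE.
have -> : (S *m K)^t* *m (S *m K) = K^t* *m E *m K.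
  by rewrite trmxC_mul psd_sqrt_trmxC // mulmxA -(mulmxA (K^t*) S S) psd_sqrtK.
rewrite -subr_ge0 -linearB /=.
have -> : K^t* *m K *m rho - K^t* *m E *m K *m rho = K^t* *m ((1%:M - E) *m (K *m rho)).
  by rewrite !mulmxA mulmxBr mulmx1 !mulmxBl.
rewrite mxtrace_mulC -mulmxA.
apply: gram_mxtrace_mul_ge0; first exact/measurement_gram/measurement_sub1.
by apply: gram_conj.
Qed.

Lemma mxtrace_sub1_sqrt_CauchySchwarz (K : 'M[R[i]]_d) :
  `|\tr ((1%:M - S) *m K *m rho)| ^+ 2 <=
  \tr ((1%:M - E) *m rho) * \tr (K^t* *m K *m rho).
Proof.
have psdE := measurement_psd measE.
have B_herm : (1%:M - S)^t* = 1%:M - S by rewrite trmxCB trmxC1 psd_sqrt_trmxC.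
have := gram_mxtrace_CauchySchwarz K (1%:M - S) g_rho.
rewrite B_herm => /le_trans; apply.
apply: ler_wpM2r; first exact: gram_mxtrace_mul_ge0 (gram_trmxC_mul _) g_rho.
rewrite -subr_ge0 -linearB /= -mulmxBl.
exact: gram_mxtrace_mul_ge0 (gram_sub_sqr_psd_sqrt measE) g_rho.
Qed.
End Contraction.

Section TestProcedures.
Variables (R : realType) (m : nat).
Local Notation proc := (proc R m).

Fixpoint mix_uniform (l : seq proc) : proc :=
  match l with
  | [::] => PFail
  | [:: q] => q
  | q :: l' => PMix (size l)%:R^-1 q (mix_uniform l')
  end.

Lemma proc_wf_mix_uniform I (s : seq I) (f : I -> proc) :
  (forall i, proc_wf (f i)) -> proc_wf (mix_uniform (map f s)).
Proof.
move=> wf_f; elim: s => // x [_ | y s IHs] //=.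
split; first by rewrite invr_ge0 ler0n invf_le1 ?ler1n ?ltr0n.
by split; first exact: wf_f.
Qed.

Lemma num_meas_mix_uniform (I : eqType) (s : seq I) (f : I -> proc) N :
  {in s, forall i, (num_meas (f i) <= N)%N} -> (num_meas (mix_uniform (map f s)) <= N)%N.
Proof.
elim: s => // x [_ /(_ x (mem_head _ _)) // | y s IHs] le_s /=.
rewrite geq_max le_s ?mem_head //; apply: IHs => z z_s.
by apply: le_s; rewrite inE z_s orbT.
Qed.

Fixpoint random_checks (s : nat) : proc :=
  if s is s'.+1 then mix_uniform [seq PMeas i (random_checks s') PFail | i <- enum 'I_m]
  else PSucc.

Definition random_length_checks (T : nat) : proc :=
  mix_uniform [seq random_checks s | s <- iota 0 T].

Lemma proc_wf_random_checks s : proc_wf (random_checks s).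
Proof. by elim: s => //= s IHs; apply: proc_wf_mix_uniform. Qed.

Lemma num_meas_random_checks s : (num_meas (random_checks s) <= s)%N.
Proof. by elim: s => //= s IHs; apply: num_meas_mix_uniform => i _ /=; rewrite maxn0. Qed.

Lemma proc_wf_random_length_checks T : proc_wf (random_length_checks T).
Proof. exact/proc_wf_mix_uniform/proc_wf_random_checks. Qed.

Lemma num_meas_random_length_checks T : (num_meas (random_length_checks T) <= T)%N.
Proof.
apply: num_meas_mix_uniform => s; rewrite mem_iota add0n => /andP[_ lt_sT].
exact: leq_trans (num_meas_random_checks s) (ltnW lt_sT).
Qed.

End TestProcedures.

Section SuccessOperator.
Variables (R : realType) (m d : nat) (E : 'I_m -> 'M[R[i]]_d).
Local Notation C := R[i].
Local Notation proc := (proc R m).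
Local Notation random_checks := (random_checks R m).
Local Notation random_length_checks := (random_length_checks R m).

Lemma succ_op_is_linear (Q : proc) : linear (succ_op E Q).
Proof.
have sandwich_lin (S : 'M[C]_d) a X Y :
    S *m (a *: X + Y) *m S = a *: (S *m X *m S) + S *m Y *m S.
  by rewrite mulmxDr mulmxDl -scalemxAr -scalemxAl.
elim: Q => [| |i q IHq r IHr|p q IHq r IHr] a X Y /=.
- by [].
- by rewrite scaler0 addr0.
- by rewrite /accept_update /reject_update !sandwich_lin IHq IHr scalerDr addrACA.
- by rewrite IHq IHr !scalerDr !scalerA mulrC [(1 - _) * a]mulrC -!scalerA addrACA.
Qed.

HB.instance Definition _ (Q : proc) :=
  GRing.isLinear.Build C 'M[C]_d 'M[C]_d *:%R (succ_op E Q) (succ_op_is_linear Q).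

Lemma succ_op_mix_uniform l X : (0 < size l)%N ->
  succ_op E (mix_uniform l) X = (size l)%:R^-1 *: \sum_(q <- l) succ_op E q X.
Proof.
elim: l => // q [_ _ | q' l IHl _]; first by rewrite big_seq1 invr1 scale1r.
rewrite [mix_uniform _]/= [succ_op _ _ _]/= IHl // [in RHS]big_cons scalerDr scalerA.
rewrite fmorphV rmorph_nat; congr (_ + _ *: _).
rewrite /=; set k := (size l).+1; rewrite -addn1 natrD.
have k_neq0 : (k%:R : C) != 0 by rewrite pnatr_eq0.
have k1_neq0 : (k%:R + 1 : C) != 0 by rewrite natr1 pnatr_eq0.
by field; rewrite k_neq0 k1_neq0.
Qed.

Hypothesis measE : forall i, is_measurement (E i).

Lemma gram_succ_op Q X : proc_wf Q -> gram X -> gram (succ_op E Q X).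
Proof.
elim: Q X => [| |i q IHq r IHr|p q IHq r IHr] X //=.
- by move=> _ _; apply: gram0.
- case=> wf_q wf_r gX.
  by apply: gramD; [apply/IHq/gram_accept_update | apply/IHr/gram_reject_update].
- case=> /andP[p_ge0 p_le1] [wf_q wf_r] gX.
  apply: gramD; apply: gramZ; [by rewrite ler0c | exact: IHq | | exact: IHr].
  by rewrite subr_ge0 -(rmorph1 (real_complex R)) lecR.
Qed.

Hypothesis m_gt0 : (0 < m)%N.

Lemma succ_op_random_checksS s X : succ_op E (random_checks s.+1) X =
  m%:R^-1 *: \sum_i succ_op E (random_checks s) (accept_update (E i) X).
Proof.
rewrite /= succ_op_mix_uniform size_map size_enum_ord // big_map big_enum /=.
by under eq_bigr do rewrite addr0.
Qed.

Lemma succ_op_random_checksSr s X : succ_op E (random_checks s.+1) X =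
  succ_op E (random_checks 1) (succ_op E (random_checks s) X).
Proof.
elim: s X => // s IHs X.
rewrite succ_op_random_checksS (eq_bigr _ (fun i _ => IHs _)) -linear_sum -linearZ.
by rewrite -succ_op_random_checksS.
Qed.

Lemma mxtrace_succ_op_random_checks1 X :
  \tr (succ_op E (random_checks 1) X) = m%:R^-1 * \sum_i \tr (E i *m X).
Proof.
rewrite succ_op_random_checksS mxtraceZ raddf_sum /=; congr (_ * _).
by apply: eq_bigr => i _; rewrite mxtrace_accept_update.
Qed.

Lemma succ_op_random_length_checks T X : (0 < T)%N ->
  succ_op E (random_length_checks T) X =
  T%:R^-1 *: \sum_(0 <= s < T) succ_op E (random_checks s) X.
Proof.
by move=> T_gt0; rewrite succ_op_mix_uniform size_map size_iota // big_map /index_iota subn0.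
Qed.

Section Completeness.
Variables (rho : 'M[C]_d) (eps : R).
Hypotheses (st_rho : is_state rho) (eps_ge0 : 0 <= eps).
Hypothesis accept_ge : forall i, (1 - eps)%:C <= \tr (E i *m rho).
Let e : C := (Num.sqrt eps)%:C.

Let g_rho : gram rho. Proof. exact: state_gram. Qed.
Let tr_rho : \tr rho = 1. Proof. by case: st_rho. Qed.

Lemma mxtrace_sqrt_deviation i (K : 'M[C]_d) : \tr (K^t* *m K *m rho) <= 1 ->
  `|\tr (K *m rho)| <= `|\tr (psd_sqrt (E i) *m K *m rho)| + e.
Proof.
move=> K_le1; set S := psd_sqrt (E i).
have -> : \tr (K *m rho) = \tr (S *m K *m rho) + \tr ((1%:M - S) *m K *m rho).
  by rewrite -linearD /= -!mulmxDl addrC subrK mul1mx.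
apply: le_trans (ler_normD _ _) _; rewrite lerD2l.
rewrite -(ler_pXn2r (_ : 0 < 2)%N) ?nnegrE ?normr_ge0 ?ler0c ?sqrtr_ge0 //.
have -> : e ^+ 2 = eps%:C by rewrite /e -rmorphXn sqr_sqrtr.
apply: le_trans (mxtrace_sub1_sqrt_CauchySchwarz (measE i) g_rho K) _.
rewrite -[eps%:C]mulr1; apply: ler_pM => //.
- exact: gram_mxtrace_mul_ge0 (measurement_gram (measurement_sub1 (measE i))) g_rho.
- exact: gram_mxtrace_mul_ge0 (gram_trmxC_mul _) g_rho.
have := accept_ge i; rewrite rmorphB /= mulmxBl mul1mx linearB /= tr_rho.
by rewrite lerBlDr addrC -lerBlDr.
Qed.

(* Each round shrinks [|tr (K rho)|] by at most [sqrt eps] while keeping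
   [tr (K^* K rho) <= 1]; after the last round Cauchy-Schwarz turns the
   remaining overlap into a lower bound on the success probability. *)
Lemma random_checks_sandwich_lb s (K : 'M[C]_d) (a : C) : 0 <= a ->
  \tr (K^t* *m K *m rho) <= 1 -> a + s%:R * e <= `|\tr (K *m rho)| ->
  a ^+ 2 <= \tr (succ_op E (random_checks s) (K *m rho *m K^t*)).
Proof.
elim: s K a => [|s IHs] K a a_ge0 K_le1.
  rewrite mul0r addr0 => a_le /=.
  apply: le_trans (_ : `|\tr (K *m rho)| ^+ 2 <= _).
    by rewrite lerXn2r ?nnegrE ?normr_ge0.
  have trK : \tr (K^t* *m K *m rho) = \tr (K *m rho *m K^t*).
    by rewrite -mulmxA mxtrace_mulC.
  have := gram_mxtrace_CauchySchwarz K 1%:M g_rho.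
  by rewrite trmxC1 !mul1mx tr_rho mul1r trK.
rewrite -natr1 mulrDl mul1r addrA => a_le.
rewrite succ_op_random_checksS mxtraceZ raddf_sum /=.
have IHi i : a ^+ 2 <= \tr (succ_op E (random_checks s)
                              (accept_update (E i) (K *m rho *m K^t*))).
  have psdE := measurement_psd (measE i).
  have -> : accept_update (E i) (K *m rho *m K^t*) =
      (psd_sqrt (E i) *m K) *m rho *m (psd_sqrt (E i) *m K)^t*.
    by rewrite /accept_update trmxC_mul psd_sqrt_trmxC // !mulmxA.
  apply: IHs => //; first exact: le_trans (mxtrace_sqrt_contraction _ _ _) K_le1.
  by rewrite -(lerD2r e); apply: le_trans a_le (mxtrace_sqrt_deviation i K_le1).
apply: le_trans (ler_wpM2l _ (ler_sum _ (fun i _ => IHi i))); last first.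
  by rewrite invr_ge0 ler0n.
rewrite sumr_const card_ord -[a ^+ 2 *+ m]mulr_natl mulrA mulVf ?mul1r //.
by rewrite pnatr_eq0 -lt0n.
Qed.

Lemma mxtrace_random_checks_lb s :
  (1 - 2 * s%:R * Num.sqrt eps)%:C <= \tr (succ_op E (random_checks s) rho).
Proof.
have r_ge0 := sqrtr_ge0 eps.
have [sr_le1 | sr_gt1] := lerP (s%:R * Num.sqrt eps) 1; last first.
  apply: le_trans (gram_mxtrace_ge0 (gram_succ_op (proc_wf_random_checks _ _ s) g_rho)).
  by rewrite -(rmorph0 (real_complex R)) lecR; lra.
have := @random_checks_sandwich_lb s 1%:M (1 - s%:R * Num.sqrt eps)%:C.
rewrite trmxC1 !mul1mx mulmx1 tr_rho normr1 => lb.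
apply: le_trans (lb _ (lexx 1) _).
- by rewrite -rmorphXn lecR; nra.
- by rewrite ler0c subr_ge0.
- by rewrite /e -(rmorph_nat (real_complex R)) -rmorphM -rmorphD subrK.
Qed.

Lemma succ_prob_random_length_checks_lb T : (0 < T)%N ->
  (1 - T%:R * Num.sqrt eps)%:C <= succ_prob E (random_length_checks T) rho.
Proof.
move=> T_gt0; have r_ge0 := sqrtr_ge0 eps.
have T_gt0' : (0 : R) < T%:R by rewrite ltr0n.
rewrite /succ_prob succ_op_random_length_checks // mxtraceZ raddf_sum.
apply: le_trans
  (ler_wpM2l _ (ler_sum _ (fun s _ => mxtrace_random_checks_lb s))); last first.
  by rewrite invr_ge0 ler0n.
rewrite -rmorph_sum -(rmorph_nat (real_complex R)) -fmorphV -rmorphM lecR.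
rewrite sumrB sumr_const_nat subn0 -mulr_suml sum_twice_nat.
have -> : T%:R^-1 * (1 *+ T - T%:R * (T%:R - 1) * Num.sqrt eps) =
    1 - (T%:R - 1) * Num.sqrt eps :> R.
  by rewrite -[1 *+ T]/(T%:R); field; rewrite gt_eqF.
nra.
Qed.
End Completeness.

Lemma sum_mxtrace_reject_random_checks s X :
  \sum_j \tr ((1%:M - E j) *m succ_op E (random_checks s) X) =
  m%:R * (\tr (succ_op E (random_checks s) X) - \tr (succ_op E (random_checks s.+1) X)).
Proof.
rewrite succ_op_random_checksSr mxtrace_succ_op_random_checks1 mulrBr mulrA.
rewrite mulfV ?mul1r ?pnatr_eq0 -?lt0n //.
under eq_bigr do rewrite mulmxBl mul1mx linearB.
by rewrite sumrB sumr_const card_ord mulr_natl.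
Qed.

Lemma mxtrace_reject_random_checks_le T rho i : is_state rho ->
  \tr ((1%:M - E i) *m \sum_(0 <= s < T) succ_op E (random_checks s) rho) <= m%:R.
Proof.
move=> st_rho; pose Y s := succ_op E (random_checks s) rho.
have gY s : gram (Y s) := gram_succ_op (proc_wf_random_checks _ _ s) (state_gram st_rho).
apply: le_trans (_ : \sum_j \tr ((1%:M - E j) *m \sum_(0 <= s < T) Y s) <= _).
  rewrite (bigD1 i) //= lerDl; apply: sumr_ge0 => j _.
  apply: gram_mxtrace_mul_ge0; last exact: gram_sum.
  exact/measurement_gram/measurement_sub1.
under eq_bigr do rewrite mulmx_sumr raddf_sum.
rewrite exchange_big /=.
under eq_bigr do rewrite sum_mxtrace_reject_random_checks.
rewrite -mulr_sumr -[X in _ <= X]mulr1 ler_wpM2l //.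
under eq_bigr do rewrite -opprB.
rewrite sumrN telescope_sumr // opprB /=; case: st_rho => _ ->.
by rewrite gerBl; apply/gram_mxtrace_ge0/gY.
Qed.

Lemma mxtrace_succ_state_random_length_checks_lb T rho lam i :
  (0 < T)%N -> is_state rho -> 0 < lam ->
  lam%:C <= succ_prob E (random_length_checks T) rho ->
  (1 - 2 * Num.sqrt (m%:R / (lam * T%:R)))%:C <=
    \tr (E i *m succ_state E (random_length_checks T) rho).
Proof.
move=> T_gt0 st_rho lam_gt0 lam_le.
pose Z := \sum_(0 <= s < T) succ_op E (random_checks s) rho.
have gZ : gram Z.
  by apply: gram_sum => s _; apply/gram_succ_op/state_gram/st_rho/proc_wf_random_checks.
have T_neq0 : (T%:R : C) != 0 by rewrite pnatr_eq0 -lt0n.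
have probE : succ_prob E (random_length_checks T) rho = T%:R^-1 * \tr Z.
  by rewrite /succ_prob succ_op_random_length_checks // mxtraceZ.
have stateE :
    \tr (E i *m succ_state E (random_length_checks T) rho) = \tr (E i *m Z) / \tr Z.
  rewrite /succ_state probE succ_op_random_length_checks // scalerA invfM invrK.
  by rewrite mulrAC mulfV // mul1r -scalemxAr mxtraceZ mulrC.
have [t t_ge0 tE] := ge0_complexE (gram_mxtrace_ge0 gZ).
have [w w_ge0 wE] :=
  ge0_complexE (gram_mxtrace_mul_ge0 (measurement_gram (measE i)) gZ).
have reject_le := mxtrace_reject_random_checks_le T i st_rho.
rewrite mulmxBl mul1mx linearB -/Z /= tE wE -rmorphB in reject_le.
rewrite -(rmorph_nat (real_complex R)) lecR in reject_le.
rewrite stateE tE wE -fmorph_div lecR; apply: sub1_2sqrt_le.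
- by rewrite divr_ge0 ?ler0n // ltW ?mulr_gt0 ?ltr0n.
- exact: divr_ge0.
apply: sub1_divr_le => //; first by rewrite mulr_gt0 ?ltr0n.
move: lam_le; rewrite probE tE -(rmorph_nat (real_complex R)) -fmorphV -rmorphM lecR.
by rewrite ler_pdivlMl ?ltr0n // mulrC.
Qed.

End SuccessOperator.

Theorem lemma22 (R : realType) (d m : nat) (E : 'I_m -> 'M[R[i]]_d)
    (T : nat) :
  (forall i, is_measurement (E i)) -> (0 < T)%N ->
  exists Q : proc R m,
    [/\ proc_wf Q, (num_meas Q <= T)%N,
     (forall (rho : 'M[R[i]]_d) (eps : R),
        is_state rho -> 0 <= eps ->
        (forall i, (1 - eps)%:C <= \tr (E i *m rho)) ->
        (1 - T%:R * Num.sqrt eps)%:C <= succ_prob E Q rho) &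
     (forall (rho : 'M[R[i]]_d) (lam : R),
        is_state rho -> 0 < lam -> lam%:C <= succ_prob E Q rho ->
        forall i, (1 - 2 * Num.sqrt (m%:R / (lam * T%:R)))%:C
                  <= \tr (E i *m succ_state E Q rho))].
Proof.
move=> measE T_gt0; have [m0 | m_gt0] := posnP m.
  (* For [m = 0] condition (iii) is vacuous and the trivial test suffices. *)
  subst m; exists PSucc; split=> [//|//| rho eps [_ tr1] _ _ | rho lam _ _ _ [] //].
  rewrite /succ_prob /= tr1 -(rmorph1 (real_complex R)) lecR gerBl.
  by rewrite mulr_ge0 ?ler0n ?sqrtr_ge0.
exists (random_length_checks R m T); split.
- exact: proc_wf_random_length_checks.
- exact: num_meas_random_length_checks.
- move=> rho eps st_rho eps_ge0 accept_ge.
  exact (succ_prob_random_length_checks_lb measE m_gt0 st_rho eps_ge0 accept_ge T_gt0).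
- move=> rho lam st_rho lam_gt0 lam_le i.
  exact (mxtrace_succ_state_random_length_checks_lb measE m_gt0 i T_gt0 st_rho lam_gt0 lam_le).
Qed.
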